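(* Let $(N,+,* )$ be a planar nearring presented by $(\Phi,R,M)$, and suppose some $d\in D(N)$ is nonzero and not a zero multiplier. Let $K$ be the set of zero multipliers of $N$ and $F=d*N$. Then: $F=d\Phi\cup\{0\}$ is a subnearring of $N$ which is a nearfield whose multiplicative group $F\setminus\{0\}$ is isomorphic to $\Phi$; $K$ is a normal subgroup of $(N,+)$ invariant under $\Phi$ (so $\Phi$ acts on $K$ as a group of fixed point free automorphisms); $(N,+)$ is the internal semidirect product $K\rtimes F$, i.e. every element of $N$ is uniquely $k+f$ with $k\in K$, $f\in F$; and for $k,k'\in K$, $f,f'\in F$, $$(k+f)*(k'+f')=\begin{cases}0 & f'=0,\\ k\phi_{f'}+f\phi_{f'} & f'\ne0,\end{cases}$$ where for nonzero $f'$, $\phi_{f'}\in\Phi$ is defined by $f'=r_{f'}\phi_{f'}$ with $r_{f'}\in R$. Moreover $K$ is an ideal of $N$.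
   Context: A (right) nearring $(N,+,* )$ is a set with a group $(N,+)$, a semigroup $(N,* )$, and right distributivity $(a+b)*c=a*c+b*c$. $N$ is planar if the relation $a\cong b$ ($x*a=x*b$ for all $x$) has at least $3$ classes and for all $a,b,c$ with $a\not\cong b$ the equation $x*a=x*b+c$ has a unique solution. A nearfield is a nearring in which $(N\setminus\{0\},* )$ is a group. An ideal is a normal additive subgroup $I$ with $i*n\in I$ and $n*m-n*(m+i)\in I$ for all $i\in I$, $n,m\in N$. Every planar nearring arises as follows, and we always consider it so presented. $\Phi\le \mathrm{Aut}(N,+)$ acts on the right, is fixed point free, and $n\mapsto -n+n\phi$ is bijective for each $\phi\ne\mathrm{id}$. $R$ is a set of representatives of the $\Phi$-orbits of $N\setminus\{0\}$ and $M\subseteq R$. Each $a\ne0$ is uniquely $a=r_a\phi_a$, $r_a\in R$, $\phi_a\in\Phi$. Multiplication: $a*b=0$ if $b=0$ or $r_b\in M$, else $a*b=a\phi_b$ (and $0*b=0$). The zero multipliers are the elements of $M\Phi\cup\{0\}$, i.e. those $n$ with $x*n=0$ for all $x$. $D(N)=\{n: n*(a+b)=n*a+n*b\ \forall a,b\}$. *)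

(* The additive group (N,+) is an arbitrary (possibly infinite, possibly
   non-abelian) group given by its operations; Phi is an abstract group G
   acting on N on the right via [act]. *)

Definition is_group {T : Type} (op : T -> T -> T) (inv : T -> T) (e : T) : Prop :=
  (forall x y z, op x (op y z) = op (op x y) z) /\
  (forall x, op e x = x) /\ (forall x, op x e = x) /\
  (forall x, op (inv x) x = e) /\ (forall x, op x (inv x) = e).

(* The data (Phi, R, M) of a planar nearring presentation:
   - G with act is a group acting faithfully on the right on (N,+) by
     automorphisms (act x g = "x g");
   - Phi is fixed point free, and n |-> -n + n phi is bijective for phi <> id;
   - R is a set of representatives of the Phi-orbits of N \ {0}:
     every a <> 0 is a = (rep a) (ph a) with rep a in R, uniquely;
   - M is a subset of R. *)
Definition presentation {N G : Type}
  (add : N -> N -> N) (opp : N -> N) (zero : N)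
  (gmul : G -> G -> G) (ginv : G -> G) (gone : G)
  (act : N -> G -> N) (R M : N -> Prop) (rep : N -> N) (ph : N -> G) : Prop :=
  is_group add opp zero /\ is_group gmul ginv gone /\
  (forall x, act x gone = x) /\
  (forall x g h, act x (gmul g h) = act (act x g) h) /\
  (forall x y g, act (add x y) g = add (act x g) (act y g)) /\
  (* Phi <= Aut(N,+) as a group of maps: distinct elements act differently *)
  (forall g h, (forall x, act x g = act x h) -> g = h) /\
  (forall x g, act x g = x -> x = zero \/ g = gone) /\
  (forall g, g <> gone -> forall y, exists! n, add (opp n) (act n g) = y) /\
  (forall r, R r -> r <> zero) /\
  (forall a, a <> zero -> R (rep a) /\ a = act (rep a) (ph a)) /\
  (forall r r' g g', R r -> R r' -> act r g = act r' g' -> r = r' /\ g = g') /\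
  (forall r, M r -> R r).

Definition presented_mul {N G : Type} (zero : N) (act : N -> G -> N)
  (M : N -> Prop) (rep : N -> N) (ph : N -> G) (mul : N -> N -> N) : Prop :=
  (forall a b, (b = zero \/ M (rep b)) -> mul a b = zero) /\
  (forall a b, b <> zero -> ~ M (rep b) -> mul a b = act a (ph b)).

Definition is_nearring {N : Type} (add : N -> N -> N) (opp : N -> N) (zero : N)
  (mul : N -> N -> N) : Prop :=
  is_group add opp zero /\
  (forall a b c, mul a (mul b c) = mul (mul a b) c) /\
  (forall a b c, mul (add a b) c = add (mul a c) (mul b c)).

Definition eqv_mul {N : Type} (mul : N -> N -> N) (a b : N) : Prop :=
  forall x, mul x a = mul x b.

Definition is_planar {N : Type} (add : N -> N -> N) (mul : N -> N -> N) : Prop :=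
  (exists a b c, ~ eqv_mul mul a b /\ ~ eqv_mul mul a c /\ ~ eqv_mul mul b c) /\
  (forall a b c, ~ eqv_mul mul a b -> exists! x, mul x a = add (mul x b) c).

Definition distributive_elt {N : Type} (add : N -> N -> N) (mul : N -> N -> N)
  (n : N) : Prop :=
  forall a b, mul n (add a b) = add (mul n a) (mul n b).

Definition zero_multiplier {N : Type} (zero : N) (mul : N -> N -> N) (n : N) : Prop :=
  forall x, mul x n = zero.

Definition subnearring {N : Type} (add : N -> N -> N) (opp : N -> N) (zero : N)
  (mul : N -> N -> N) (S : N -> Prop) : Prop :=
  S zero /\ (forall x y, S x -> S y -> S (add x y)) /\ (forall x, S x -> S (opp x)) /\
  (forall x y, S x -> S y -> S (mul x y)).

Definition nearfield_on {N : Type} (zero : N) (mul : N -> N -> N) (S : N -> Prop) : Prop :=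
  exists e, S e /\ e <> zero /\
    (forall x, S x -> x <> zero -> mul e x = x /\ mul x e = x) /\
    (forall x, S x -> x <> zero ->
       exists y, S y /\ y <> zero /\ mul x y = e /\ mul y x = e).

Definition normal_subgroup {N : Type} (add : N -> N -> N) (opp : N -> N) (zero : N)
  (K : N -> Prop) : Prop :=
  K zero /\ (forall x y, K x -> K y -> K (add x y)) /\ (forall x, K x -> K (opp x)) /\
  (forall n k, K k -> K (add (add n k) (opp n))).

Definition nr_ideal {N : Type} (add : N -> N -> N) (opp : N -> N) (zero : N)
  (mul : N -> N -> N) (I : N -> Prop) : Prop :=
  normal_subgroup add opp zero I /\
  (forall i n, I i -> I (mul i n)) /\
  (forall i n m, I i -> I (add (mul n m) (opp (mul n (add m i))))).

From Stdlib Require Import Classical.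

Set Implicit Arguments.
Unset Strict Implicit.

(* A right factor [b] acts through its orbit only: [x * b] is [0] when [b]
   lies in [K = M Phi ∪ {0}] and [x ph_b] otherwise. Since [d ∉ K], [d * N]
   is [d Phi ∪ {0}], and [g ↦ d (ph d)^-1 g] maps [Phi] isomorphically onto
   [F \ {0}]. Distributivity of [d] makes [n ↦ d * n] an additive
   homomorphism with kernel [K], and [d * n] determines [x * n] for all [x];
   hence [K] is normal, [n = (n - e * n) + e * n] with [e] the identity of
   [F], and adding an element of [K] to a right factor changes no product,
   which gives the product formula and the ideal property. *)

Section GroupFacts.

Variables (T : Type) (op : T -> T -> T) (inv : T -> T) (e : T).
Hypothesis Hgrp : is_group op inv e.

Lemma group_cancel_r a b c : op a c = op b c -> a = b.
Proof.
  destruct Hgrp as (opA & op1x & opx1 & _ & opxV).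
  intros H. rewrite <- (opx1 a), <- (opx1 b), <- (opxV c), !opA, H. reflexivity.
Qed.

Lemma group_cancel_l a b c : op c a = op c b -> a = b.
Proof.
  destruct Hgrp as (opA & op1x & _ & opVx & _).
  intros H. rewrite <- (op1x a), <- (op1x b), <- (opVx c), <- !opA, H. reflexivity.
Qed.

Lemma group_inv_unique a b : op a b = e -> b = inv a.
Proof.
  intros H. apply (group_cancel_l (c := a)).
  destruct Hgrp as (_ & _ & _ & _ & opxV). rewrite H, opxV. reflexivity.
Qed.

End GroupFacts.

Lemma nearfield_on_of_group_iso (N G : Type) (zero : N) (mul : N -> N -> N)
  (gmul : G -> G -> G) (ginv : G -> G) (gone : G) (S : N -> Prop) (iso : G -> N) :
  is_group gmul ginv gone ->
  (forall g, S (iso g) /\ iso g <> zero) ->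
  (forall x, S x -> x <> zero -> exists g, iso g = x) ->
  (forall g h, iso (gmul g h) = mul (iso g) (iso h)) ->
  nearfield_on zero mul S.
Proof.
  intros (_ & g1x & gx1 & gVx & gxV) iso_S iso_onto iso_mul.
  exists (iso gone). split; [apply iso_S|]. split; [apply iso_S|]. split.
  - intros x Sx x0. destruct (iso_onto x Sx x0) as [g <-].
    rewrite <- !iso_mul, g1x, gx1. split; reflexivity.
  - intros x Sx x0. destruct (iso_onto x Sx x0) as [g <-].
    exists (iso (ginv g)). rewrite <- !iso_mul, gVx, gxV.
    destruct (iso_S (ginv g)) as [S' n0']. repeat split; assumption.
Qed.

Section Presentation.

Variables (N G : Type) (add : N -> N -> N) (opp : N -> N) (zero : N)
  (gmul : G -> G -> G) (ginv : G -> G) (gone : G)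
  (act : N -> G -> N) (R M : N -> Prop) (rep : N -> N) (ph : N -> G).
Hypothesis Hpres : presentation add opp zero gmul ginv gone act R M rep ph.

Let add_group : is_group add opp zero.
Proof. destruct Hpres as (H & _); exact H. Qed.
Let gmul_group : is_group gmul ginv gone.
Proof. destruct Hpres as (_ & H & _); exact H. Qed.
Let addA x y z : add x (add y z) = add (add x y) z.
Proof. destruct add_group as (H & _); apply H. Qed.
Let add0x x : add zero x = x.
Proof. destruct add_group as (_ & H & _); apply H. Qed.
Let addx0 x : add x zero = x.
Proof. destruct add_group as (_ & _ & H & _); apply H. Qed.
Let addNx x : add (opp x) x = zero.
Proof. destruct add_group as (_ & _ & _ & H & _); apply H. Qed.
Let addxN x : add x (opp x) = zero.
Proof. destruct add_group as (_ & _ & _ & _ & H); apply H. Qed.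
Let gmulA x y z : gmul x (gmul y z) = gmul (gmul x y) z.
Proof. destruct gmul_group as (H & _); apply H. Qed.
Let gmul1x x : gmul gone x = x.
Proof. destruct gmul_group as (_ & H & _); apply H. Qed.
Let gmulVx x : gmul (ginv x) x = gone.
Proof. destruct gmul_group as (_ & _ & _ & H & _); apply H. Qed.
Let gmulxV x : gmul x (ginv x) = gone.
Proof. destruct gmul_group as (_ & _ & _ & _ & H); apply H. Qed.
Let act1 x : act x gone = x.
Proof. destruct Hpres as (_ & _ & H & _); apply H. Qed.
Let actM x g h : act x (gmul g h) = act (act x g) h.
Proof. destruct Hpres as (_ & _ & _ & H & _); apply H. Qed.
Let actD x y g : act (add x y) g = add (act x g) (act y g).
Proof. destruct Hpres as (_ & _ & _ & _ & H & _); apply H. Qed.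
Let R_neq0 r : R r -> r <> zero.
Proof. destruct Hpres as (_ & _ & _ & _ & _ & _ & _ & _ & H & _); apply H. Qed.
Let rep_spec a : a <> zero -> R (rep a) /\ a = act (rep a) (ph a).
Proof. destruct Hpres as (_ & _ & _ & _ & _ & _ & _ & _ & _ & H & _); apply H. Qed.
Let rep_unique r r' g g' : R r -> R r' -> act r g = act r' g' -> r = r' /\ g = g'.
Proof. destruct Hpres as (_ & _ & _ & _ & _ & _ & _ & _ & _ & _ & H & _); apply H. Qed.

Lemma act0 g : act zero g = zero.
Proof.
  apply (group_cancel_r add_group (c := act zero g)).
  rewrite <- actD, !add0x. reflexivity.
Qed.

Lemma act_neq0 x g : x <> zero -> act x g <> zero.
Proof.
  intros x0 H. apply x0.
  rewrite <- (act1 x), <- (gmulxV g), actM, H, act0. reflexivity.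
Qed.

Lemma rep_ph_act n g : n <> zero -> rep (act n g) = rep n /\ ph (act n g) = gmul (ph n) g.
Proof.
  intros n0. destruct (rep_spec (act_neq0 (g := g) n0)) as [Rng Eng].
  destruct (rep_spec n0) as [Rn En].
  apply rep_unique; auto. rewrite <- Eng, actM, <- En. reflexivity.
Qed.

Lemma rep_ph_act_rep r g : R r -> rep (act r g) = r /\ ph (act r g) = g.
Proof.
  intros Rr. destruct (rep_spec (act_neq0 (g := g) (R_neq0 Rr))) as [Rrg Erg].
  apply rep_unique; auto.
Qed.

Lemma act_inj x a b : x <> zero -> act x a = act x b -> a = b.
Proof.
  intros x0 H. destruct (rep_spec x0) as [Rx Ex].
  rewrite Ex, <- !actM in H.
  apply (group_cancel_l gmul_group (c := ph x)), (rep_unique Rx Rx H).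
Qed.

Section Multiplication.

Variable mul : N -> N -> N.
Hypothesis Hmul : presented_mul zero act M rep ph mul.

Let mul_K a b : b = zero \/ M (rep b) -> mul a b = zero.
Proof. apply Hmul. Qed.
Let mul_notK a b : b <> zero -> ~ M (rep b) -> mul a b = act a (ph b).
Proof. apply Hmul. Qed.

Local Notation K := (zero_multiplier zero mul).

Lemma mulx0 x : mul x zero = zero.
Proof. apply mul_K. left; reflexivity. Qed.

Variable d : N.
Hypothesis Hd0 : d <> zero.
Hypothesis HdK : ~ K d.

Lemma zero_multiplierP x : K x <-> x = zero \/ M (rep x).
Proof.
  split.
  - intros Kx. apply NNPP. intros [x0 xM]%not_or_and.
    apply (act_neq0 (g := ph x) Hd0). rewrite <- mul_notK; auto.
  - intros Hx y. apply mul_K, Hx.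
Qed.

Lemma mul_not_zero_multiplier x y : ~ K y -> mul x y = act x (ph y).
Proof.
  rewrite zero_multiplierP. intros [y0 yM]%not_or_and. apply mul_notK; assumption.
Qed.

Lemma zero_multiplier_act k g : K k -> K (act k g).
Proof.
  rewrite !zero_multiplierP. intros [->|kM].
  - left. apply act0.
  - destruct (classic (k = zero)) as [->|k0]; [left; apply act0|].
    right. rewrite (proj1 (rep_ph_act g k0)). exact kM.
Qed.

Lemma zero_multiplier_mulr k y : K k -> K (mul k y).
Proof.
  intros Kk. destruct (classic (K y)) as [Ky|Ky].
  - rewrite (Ky k). apply zero_multiplierP. left; reflexivity.
  - rewrite mul_not_zero_multiplier by exact Ky. apply zero_multiplier_act, Kk.
Qed.

Lemma zero_multiplierE x : K x <-> mul d x = zero.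
Proof.
  split; [intros Kx; apply Kx|].
  intros dx. apply NNPP. intros Kx. rewrite mul_not_zero_multiplier in dx by exact Kx.
  exact (act_neq0 (g := ph x) Hd0 dx).
Qed.

Lemma rep_d_notM : ~ M (rep d).
Proof. intros dM. apply HdK, zero_multiplierP. right; exact dM. Qed.

Lemma mul_act_d x h : mul x (act d h) = act x (gmul (ph d) h).
Proof.
  destruct (rep_ph_act h Hd0) as [Erep Eph].
  rewrite mul_notK, Eph; [reflexivity | apply act_neq0, Hd0 |].
  rewrite Erep. exact rep_d_notM.
Qed.

Lemma mul_eq_of_mul_d_eq x y z : mul d x = mul d y -> mul z x = mul z y.
Proof.
  intros Hxy. destruct (classic (K x)) as [Kx|Kx].
  - assert (Ky : K y) by (apply zero_multiplierE; rewrite <- Hxy; apply Kx).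
    rewrite (Kx z), (Ky z). reflexivity.
  - assert (Ky : ~ K y).
    { rewrite zero_multiplierE, <- Hxy, <- zero_multiplierE. exact Kx. }
    rewrite !mul_not_zero_multiplier in * by assumption.
    rewrite (act_inj Hd0 Hxy). reflexivity.
Qed.

Definition dN (x : N) : Prop := exists n, x = mul d n.

Lemma dNP x : dN x <-> x = zero \/ exists g, x = act d g.
Proof.
  pose proof (proj1 (rep_spec Hd0)) as Rd. split.
  - intros [n ->]. destruct (classic (K n)) as [Kn|Kn].
    + left. apply Kn.
    + right. exists (ph n). apply mul_not_zero_multiplier, Kn.
  - intros [->|[g ->]].
    + exists zero. symmetry. apply mulx0.
    + destruct (rep_ph_act_rep g Rd) as [Erep Eph].
      exists (act (rep d) g). rewrite mul_notK, Eph; [reflexivity | |].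
      * apply act_neq0, R_neq0, Rd.
      * rewrite Erep. exact rep_d_notM.
Qed.

Lemma dN_mul_d_inj f f' : dN f -> dN f' -> mul d f = mul d f' -> f = f'.
Proof.
  rewrite !dNP. intros [->|[g ->]] [->|[g' ->]] H; rewrite ?mulx0, ?mul_act_d in H.
  - reflexivity.
  - destruct (act_neq0 Hd0 (eq_sym H)).
  - destruct (act_neq0 Hd0 H).
  - apply act_inj, (group_cancel_l gmul_group) in H; [subst; reflexivity | exact Hd0].
Qed.

(* Shifting by [(ph d)^-1] compensates for [x * (d g) = x (ph d) g]. *)
Definition orbit_iso (g : G) : N := act d (gmul (ginv (ph d)) g).

Lemma orbit_iso_dN g : dN (orbit_iso g) /\ orbit_iso g <> zero.
Proof.
  split; [apply dNP; right; eexists; reflexivity | apply act_neq0, Hd0].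
Qed.

Lemma orbit_iso_inj g h : orbit_iso g = orbit_iso h -> g = h.
Proof. intros H. apply act_inj, (group_cancel_l gmul_group) in H; [exact H | exact Hd0]. Qed.

Lemma orbit_iso_onto x : dN x -> x <> zero -> exists g, orbit_iso g = x.
Proof.
  rewrite dNP. intros [->|[g ->]] x0; [contradiction|].
  exists (gmul (ph d) g). unfold orbit_iso. rewrite gmulA, gmulVx, gmul1x. reflexivity.
Qed.

Lemma orbit_iso_mul g h : orbit_iso (gmul g h) = mul (orbit_iso g) (orbit_iso h).
Proof.
  unfold orbit_iso. rewrite mul_act_d, <- actM, (gmulA (ph d)), gmulxV, gmul1x, !gmulA. reflexivity.
Qed.

Lemma mul_d_orbit_iso1 : mul d (orbit_iso gone) = d.
Proof.
  unfold orbit_iso. rewrite mul_act_d, gmulA, gmulxV, gmul1x, act1. reflexivity.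
Qed.

Lemma mul_dN x f : dN f -> f <> zero -> mul x f = act x (ph f).
Proof.
  rewrite dNP. intros [->|[g ->]] f0; [contradiction|].
  rewrite mul_act_d, (proj2 (rep_ph_act g Hd0)). reflexivity.
Qed.

Section DistributiveElement.

Hypothesis HdD : distributive_elt add mul d.
Hypothesis mulA : forall a b c, mul a (mul b c) = mul (mul a b) c.

Lemma mul_d_opp a : mul d (opp a) = opp (mul d a).
Proof. apply (group_inv_unique add_group). rewrite <- HdD, addxN. apply mulx0. Qed.

Lemma zero_multiplier_normal : normal_subgroup add opp zero K.
Proof.
  repeat split.
  - intros x. apply mulx0.
  - intros x y Kx Ky. apply zero_multiplierE.
    rewrite HdD, (proj1 (zero_multiplierE x) Kx), (proj1 (zero_multiplierE y) Ky). apply add0x.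
  - intros x Kx. apply zero_multiplierE.
    rewrite mul_d_opp, (proj1 (zero_multiplierE x) Kx).
    symmetry. apply (group_inv_unique add_group), add0x.
  - intros n k Kk. apply zero_multiplierE.
    rewrite !HdD, mul_d_opp, (proj1 (zero_multiplierE k) Kk), addx0, addxN. reflexivity.
Qed.

Lemma mul_add_zero_multiplier_l x k y : K k -> mul x (add k y) = mul x y.
Proof.
  intros Kk. apply mul_eq_of_mul_d_eq.
  rewrite HdD, (proj1 (zero_multiplierE k) Kk). apply add0x.
Qed.

Lemma mul_add_zero_multiplier_r x y k : K k -> mul x (add y k) = mul x y.
Proof.
  intros Kk. apply mul_eq_of_mul_d_eq.
  rewrite HdD, (proj1 (zero_multiplierE k) Kk). apply addx0.
Qed.

Lemma dN_subnearring : subnearring add opp zero mul dN.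
Proof.
  repeat split.
  - exists zero. symmetry. apply mulx0.
  - intros x y [a ->] [b ->]. exists (add a b). symmetry. apply HdD.
  - intros x [a ->]. exists (opp a). symmetry. apply mul_d_opp.
  - intros x y [a ->] _. exists (mul a y). symmetry. apply mulA.
Qed.

Lemma zero_multiplier_dN_decomposition n :
  exists k f, K k /\ dN f /\ n = add k f /\
    (forall k' f', K k' -> dN f' -> n = add k' f' -> k' = k /\ f' = f).
Proof.
  set (f := mul (orbit_iso gone) n).
  assert (Ff : dN f).
  { destruct (proj1 (orbit_iso_dN gone)) as [m Em].
    exists (mul m n). unfold f. rewrite Em. symmetry. apply mulA. }
  assert (dfn : mul d f = mul d n).
  { unfold f. rewrite mulA, mul_d_orbit_iso1. reflexivity. }
  exists (add n (opp f)), f. split; [|split; [exact Ff|split]].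
  - apply zero_multiplierE. rewrite HdD, mul_d_opp, dfn. apply addxN.
  - rewrite <- addA, addNx, addx0. reflexivity.
  - intros k' f' Kk' Ff' En.
    assert (Ef : f' = f).
    { apply dN_mul_d_inj; [exact Ff' | exact Ff |].
      rewrite dfn, En. symmetry. apply mul_add_zero_multiplier_l, Kk'. }
    split; [|exact Ef]. subst f'.
    apply (group_cancel_r add_group (c := f)). rewrite En, <- addA, addNx, addx0. reflexivity.
Qed.

Lemma mul_zero_multiplier_dN k k' f f' : K k' -> dN f' ->
  (f' = zero -> mul (add k f) (add k' f') = zero) /\
  (f' <> zero -> mul (add k f) (add k' f') = add (act k (ph f')) (act f (ph f'))).
Proof.
  intros Kk' Ff'. rewrite mul_add_zero_multiplier_l by exact Kk'. split.
  - intros ->. apply mulx0.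
  - intros f0. rewrite mul_dN by assumption. apply actD.
Qed.

Lemma zero_multiplier_ideal : nr_ideal add opp zero mul K.
Proof.
  split; [exact zero_multiplier_normal|]. split; [exact zero_multiplier_mulr|].
  intros i n m Ki. rewrite mul_add_zero_multiplier_r, addxN by exact Ki.
  intros x. apply mulx0.
Qed.

End DistributiveElement.

End Multiplication.

End Presentation.

Theorem mainTheorem6 (N G : Type)
  (add : N -> N -> N) (opp : N -> N) (zero : N)
  (gmul : G -> G -> G) (ginv : G -> G) (gone : G)
  (act : N -> G -> N) (R M : N -> Prop) (rep : N -> N) (ph : N -> G)
  (mul : N -> N -> N)
  (Hpres : presentation add opp zero gmul ginv gone act R M rep ph)
  (Hmul : presented_mul zero act M rep ph mul)
  (Hnr : is_nearring add opp zero mul)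
  (Hplanar : is_planar add mul)
  (d : N) (HdD : distributive_elt add mul d) (Hd0 : d <> zero)
  (HdK : ~ zero_multiplier zero mul d) :
  let K := zero_multiplier zero mul in
  let F := fun x => exists n, x = mul d n in
  (forall x, F x <-> (x = zero \/ exists g, x = act d g)) /\
  subnearring add opp zero mul F /\
  nearfield_on zero mul F /\
  (exists iso : G -> N,
     (forall g, F (iso g) /\ iso g <> zero) /\
     (forall g h, iso g = iso h -> g = h) /\
     (forall x, F x -> x <> zero -> exists g, iso g = x) /\
     (forall g h, iso (gmul g h) = mul (iso g) (iso h))) /\
  normal_subgroup add opp zero K /\
  (forall k g, K k -> K (act k g)) /\
  (forall n, exists k f, K k /\ F f /\ n = add k f /\
     (forall k' f', K k' -> F f' -> n = add k' f' -> k' = k /\ f' = f)) /\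
  (forall k k' f f', K k -> K k' -> F f -> F f' ->
     (f' = zero -> mul (add k f) (add k' f') = zero) /\
     (f' <> zero -> mul (add k f) (add k' f') = add (act k (ph f')) (act f (ph f')))) /\
  nr_ideal add opp zero mul K.
Proof.
  intros K F.
  destruct Hnr as (_ & mulA & _).
  assert (Ggrp : is_group gmul ginv gone) by apply Hpres.
  pose proof (orbit_iso_dN Hpres Hmul Hd0 HdK) as iso_dN.
  pose proof (orbit_iso_onto Hpres Hmul Hd0 HdK) as iso_onto.
  pose proof (orbit_iso_mul Hpres Hmul Hd0 HdK) as iso_mul.
  split; [exact (dNP Hpres Hmul Hd0 HdK)|].
  split; [exact (dN_subnearring Hpres Hmul HdD mulA)|].
  split; [exact (nearfield_on_of_group_iso Ggrp iso_dN iso_onto iso_mul)|].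
  split.
  { exists (orbit_iso gmul ginv act ph d).
    split; [exact iso_dN|]. split; [exact (orbit_iso_inj Hpres Hd0)|].
    split; [exact iso_onto | exact iso_mul]. }
  split; [exact (zero_multiplier_normal Hpres Hmul Hd0 HdD)|].
  split; [exact (zero_multiplier_act Hpres Hmul Hd0)|].
  split; [exact (zero_multiplier_dN_decomposition Hpres Hmul Hd0 HdK HdD mulA)|].
  split.
  { intros k k' f f' _ Kk' _ Ff'.
    exact (mul_zero_multiplier_dN Hpres Hmul Hd0 HdK HdD k f Kk' Ff'). }
  exact (zero_multiplier_ideal Hpres Hmul Hd0 HdD).
Qed.
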